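(* Let $n\ge 1$, $i\in\{1,\ldots,n-1\}$, and let $C$ be a set of transpositions in $S_n$ which is $s_i$-stable, i.e. $s_i\in C$ and $s_iCs_i=C$. Then the divided difference operator $\partial_i$ is defined on all of $H_C$, and $\partial_i(H_C)\subseteq H_C$.
   Context: Let $S_n$ be the symmetric group on $\{1,\ldots,n\}$ with $(vw)(j)=v(w(j))$, and $s_i=(i\leftrightarrow i+1)$. Let $H=\mathrm{Fun}(S_n,\mathbb{C}[t_1,\ldots,t_n])$ be the ring of functions from $S_n$ to the polynomial ring, with pointwise operations. The star action (right action) of $w\in S_n$ on $f\in H$ is $(f*w)(v)=f(vw^{-1})$, extended linearly to $\mathbb{C}[S_n]$ (so $f*(1-\tau)=f-f*\tau$). Let $t_i\in H$ denote the constant function $v\mapsto t_i$ and $x_i\in H$ the function $v\mapsto t_{v(i)}$. For a transposition $\tau=(i\leftrightarrow k)$, an element $f\in H$ satisfies condition $\tau$ if $f-f*\tau=(x_i-x_k)g$ for some $g\in H$; these elements form a subring $H_\tau$, and for a set $C$ of transpositions $H_C=\bigcap_{\tau\in C}H_\tau$ (with $H_\varnothing=H$). For $f\in H_{s_i}$, the divided difference $\partial_i(f)$ is the unique $g\in H$ with $f-f*s_i=(x_i-x_{i+1})g$ (unique since $x_i-x_{i+1}$ is nonzero at every permutation); $\partial_i$ is defined exactly on $H_{s_i}$. *)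

From mathcomp Require Import all_boot all_algebra all_fingroup.
From mathcomp Require Import mpoly complex reals.

Set Implicit Arguments.
Unset Strict Implicit.
Unset Printing Implicit Defensive.
Import GRing.Theory.
Local Open Scope ring_scope.

(* S_n := {perm 'I_n}, points are 0-based: {0,...,n-1} stands for {1,...,n}.
   Polynomial ring C[t_1..t_n] := {mpoly C[n]}, with t_j := 'X_j. *)

Section Defs.
Variables (R : realType) (n : nat).
Local Notation C := (complex R).
Local Notation H := ({perm 'I_n} -> {mpoly C[n]}).

(* Paper's product (vw)(j) = v(w(j)); MathComp's (s * t) x = t (s x),
   so vw = w * v in MathComp. *)
Definition pcomp (v w : {perm 'I_n}) : {perm 'I_n} := (w * v)%g.

Definition star (f : H) (w : {perm 'I_n}) : H := fun v => f (pcomp v (w^-1)%g).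

Definition xfun (i : 'I_n) : H := fun v => 'X_(v i).

Definition tfun (i : 'I_n) : H := fun _ => 'X_i.

Definition cond_pair (i k : 'I_n) (f : H) : Prop :=
  exists g : H, forall v, f v - star f (tperm i k) v = (xfun i v - xfun k v) * g v.

Definition is_transposition (tau : {perm 'I_n}) : Prop :=
  exists i k : 'I_n, i != k /\ tau = tperm i k.

Definition H_tau (tau : {perm 'I_n}) (f : H) : Prop :=
  exists i k : 'I_n, [/\ i != k, tau = tperm i k & cond_pair i k f].

Definition H_C (Cs : {set {perm 'I_n}}) (f : H) : Prop :=
  forall tau, tau \in Cs -> H_tau tau f.

(* simple transposition s_i = (i <-> i+1), 0-based i with i+1 < n *)
Definition s_ (i : nat) (hi : (i.+1 < n)%N) : {perm 'I_n} :=
  tperm (Ordinal (ltnW hi)) (Ordinal hi).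

Definition x_ (i : nat) (hi : (i.+1 < n)%N) : H := xfun (Ordinal (ltnW hi)).
Definition x_succ (i : nat) (hi : (i.+1 < n)%N) : H := xfun (Ordinal hi).

(* g is the divided difference partial_i(f): f - f*s_i = (x_i - x_{i+1}) g.
   (Unique, as stated in the paper.) *)
Definition is_divdiff (i : nat) (hi : (i.+1 < n)%N) (f g : H) : Prop :=
  forall v, f v - star f (s_ hi) v = (x_ hi v - x_succ hi v) * g v.

Definition divdiff_defined (i : nat) (hi : (i.+1 < n)%N) (f : H) : Prop :=
  exists g : H, is_divdiff hi f g.

Definition si_stable (i : nat) (hi : (i.+1 < n)%N) (Cs : {set {perm 'I_n}}) : Prop :=
  s_ hi \in Cs /\ [set pcomp (pcomp (s_ hi) c) (s_ hi) | c in Cs] = Cs.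

End Defs.

From Pilot Require Import Defs.
From HB Require Import structures.
From mathcomp Require Import all_boot all_algebra all_fingroup.
From mathcomp Require Import mpoly complex reals.
From Stdlib Require Import IndefiniteDescription.
From mathcomp Require Import ring.

(* Condition (a b) at v is a congruence modulo t_(v a) - t_(v b), and in
   C[t] such a congruence holds iff both sides agree after substituting
   t_(v b) for t_(v a).  Write L(v) = t_(v i) - t_(v (i+1)) and let
   tau = (a b) in C.  Condition tau at v and condition s_i tau s_i (in C
   by stability) at v s_i give
     L(v) ∂f(v) = f(v) - f(v s_i) ≡ f(v tau) - f(v tau s_i) = L(v tau) ∂f(v tau).
   After the substitution L(v) and L(v tau) coincide, and they are nonzero
   unless tau = s_i, so they cancel in the domain C[t].  For tau = s_i,
   ∂f is s_i-invariant outright. *)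

Set Implicit Arguments.
Unset Strict Implicit.
Unset Printing Implicit Defensive.
Import GRing.Theory.
Local Open Scope ring_scope.

Section Congruence.
Variable R : comNzRingType.

Definition eqmod (d a b : R) := exists q, a - b = d * q.

Lemma eqmod_refl d a : eqmod d a a.
Proof. by exists 0; rewrite subrr mulr0. Qed.

Lemma eqmod_sym d a b : eqmod d a b -> eqmod d b a.
Proof. by move=> [q e]; exists (- q); rewrite mulrN -e opprB. Qed.

Lemma eqmod_trans d a b c : eqmod d a b -> eqmod d b c -> eqmod d a c.
Proof. by move=> [q1 e1] [q2 e2]; exists (q1 + q2); rewrite mulrDr -e1 -e2; ring. Qed.

Lemma eqmodD d a b c e : eqmod d a b -> eqmod d c e -> eqmod d (a + c) (b + e).
Proof. by move=> [q1 e1] [q2 e2]; exists (q1 + q2); rewrite mulrDr -e1 -e2; ring. Qed.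

Lemma eqmodB d a b c e : eqmod d a b -> eqmod d c e -> eqmod d (a - c) (b - e).
Proof. by move=> [q1 e1] [q2 e2]; exists (q1 - q2); rewrite mulrBr -e1 -e2; ring. Qed.

Lemma eqmodM d a b c e : eqmod d a b -> eqmod d c e -> eqmod d (a * c) (b * e).
Proof.
move=> [q1 e1] [q2 e2]; exists (q1 * c + b * q2).
by rewrite mulrDr mulrA -e1 mulrCA -e2; ring.
Qed.

Lemma eqmodX d a b k : eqmod d a b -> eqmod d (a ^+ k) (b ^+ k).
Proof.
move=> ab; elim: k => [|k IHk]; first by rewrite !expr0; apply: eqmod_refl.
by rewrite !exprS; apply: eqmodM.
Qed.

Lemma eqmod_opp_mod d a b : eqmod (- d) a b -> eqmod d a b.
Proof. by move=> [q e]; exists (- q); rewrite mulrN -mulNr. Qed.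

End Congruence.

Section SubstVar.
Variables (K : idomainType) (n : nat).
Local Notation P := {mpoly K[n]}.
Implicit Types (p q j : 'I_n) (a b : P).

Definition rename_var p q j := if j == p then q else j.

Definition subst_var p q (a : P) : P :=
  a \mPo [tuple 'X_(rename_var p q j) | j < n].

HB.instance Definition _ p q := GRing.RMorphism.copy (subst_var p q)
  (comp_mpoly [tuple 'X_(rename_var p q j) | j < n]).

Lemma subst_varX p q j : subst_var p q 'X_j = 'X_(rename_var p q j).
Proof. by rewrite /subst_var comp_mpolyXU -tnth_nth tnth_mktuple. Qed.

Lemma mpolyX_subr_eq0 p q : ('X_p - 'X_q == 0 :> P) = (p == q).
Proof.
rewrite subr_eq0; apply/eqP/eqP => [/(congr1 (mcoeff U_(q)%MM))|-> //].
by rewrite !mcoeffXU eqxx; case: eqP => // _ /eqP; rewrite eq_sym oner_eq0.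
Qed.

Lemma eqmod_subst_var p q a : eqmod ('X_p - 'X_q) a (subst_var p q a).
Proof.
have eqmodX_rename j : eqmod ('X_p - 'X_q : P) 'X_j 'X_(rename_var p q j).
  by rewrite /rename_var; case: eqP => [->|_]; [exists 1; rewrite mulr1|apply: eqmod_refl].
rewrite {1}(mpolyE a) /subst_var comp_mpolyE.
apply: (big_ind2 (eqmod _)); [exact: eqmod_refl | by move=> *; apply: eqmodD |].
move=> m _; rewrite -!mul_mpolyC; apply: eqmodM; first exact: eqmod_refl.
rewrite (mpolyXE_id _ m).
apply: (big_ind2 (eqmod _)); [exact: eqmod_refl | by move=> *; apply: eqmodM |].
by move=> j _; rewrite tnth_mktuple; apply: eqmodX.
Qed.

Lemma eqmod_substP p q a b :
  eqmod ('X_p - 'X_q) a b <-> subst_var p q a = subst_var p q b.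
Proof.
split=> [[r e]|e].
  apply/eqP; rewrite -subr_eq0 -rmorphB e rmorphM rmorphB /= !subst_varX.
  by rewrite /rename_var eqxx if_same subrr mul0r.
apply: eqmod_trans (eqmod_subst_var p q a) _.
by rewrite e; apply/eqmod_sym/eqmod_subst_var.
Qed.

Lemma rename_var_tperm (v : {perm 'I_n}) (a b z : 'I_n) :
  rename_var (v a) (v b) (v (tperm a b z)) = rename_var (v a) (v b) (v z).
Proof. by rewrite /rename_var; case: tpermP => [->|->|//]; rewrite eqxx if_same. Qed.

Lemma rename_var_perm_inj (v : {perm 'I_n}) (a b c d : 'I_n) : c != d ->
  rename_var (v a) (v b) (v c) = rename_var (v a) (v b) (v d) ->
  tperm a b = tperm c d.
Proof.
rewrite /rename_var !(inj_eq perm_inj).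
case: (c =P a) => [->|_]; case: (d =P a) => [->|_] cd; rewrite ?eqxx // in cd.
- by move/perm_inj ->.
- by move/perm_inj ->; rewrite tpermC.
- by move/perm_inj => cd'; rewrite cd' eqxx in cd.
Qed.

End SubstVar.

Lemma stable_conj_tperm (n : nat) (x y a b : 'I_n) (Cs : {set {perm 'I_n}}) :
  [set Defs.pcomp (Defs.pcomp (tperm x y) c) (tperm x y) | c in Cs] = Cs ->
  tperm a b \in Cs -> tperm (tperm x y a) (tperm x y b) \in Cs.
Proof.
move=> stab; rewrite -{1}stab => /imsetP [c cC e].
by rewrite -tpermJ e /Defs.pcomp conjgE tpermV !mulgA tperm2 mul1g -mulgA tperm2 mulg1.
Qed.

Section DividedDifference.
Variables (R : realType) (n : nat).
Local Notation H := ({perm 'I_n} -> {mpoly (complex R)[n]}).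
Implicit Types (f g : H) (a b : 'I_n) (v : {perm 'I_n}).

Lemma star_tperm f a b v : star f (tperm a b) v = f (tperm a b * v)%g.
Proof. by rewrite /Defs.star /Defs.pcomp tpermV. Qed.

Lemma cond_pairP a b f : cond_pair a b f <->
  forall v, eqmod ('X_(v a) - 'X_(v b)) (f v) (f (tperm a b * v)%g).
Proof.
split=> [[g e] v | e]; first by exists (g v); rewrite -star_tperm e.
have [g eg] := functional_choice _ e.
by exists g => v; rewrite star_tperm eg.
Qed.

Lemma cond_pairC a b f : cond_pair a b f -> cond_pair b a f.
Proof.
move=> /cond_pairP e; apply/cond_pairP => v.
by apply: eqmod_opp_mod; rewrite opprB tpermC.
Qed.

Lemma H_tau_tperm a b f : a != b -> H_tau (tperm a b) f -> cond_pair a b f.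
Proof.
move=> ab [a' [b' [_ e fab']]]; have := congr1 (fun t : {perm 'I_n} => t a) e.
rewrite tpermL; case: tpermP => [-> ->|-> ->|_ _ ba] //; first exact: cond_pairC.
by rewrite ba eqxx in ab.
Qed.

Section Congruences.
Variables (f g : H) (i0 i1 : 'I_n).
Hypothesis i01 : i0 != i1.
Let s := tperm i0 i1.
Hypothesis fg : forall v, f v - f (s * v)%g = ('X_(v i0) - 'X_(v i1)) * g v.

Lemma divdiff_tperm_invariant v : g (s * v)%g = g v.
Proof.
have nz : ('X_(v i0) - 'X_(v i1) : {mpoly (complex R)[n]}) != 0.
  by rewrite mpolyX_subr_eq0 (inj_eq perm_inj).
have := fg (s * v)%g; rewrite tpermKg !permM tpermL tpermR => fg_s.
by apply: (mulfI nz); rewrite -fg -[f v - _]opprB fg_s; ring.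
Qed.

Lemma eqmod_divdiff a b v : tperm a b != s ->
  cond_pair a b f -> cond_pair (s a) (s b) f ->
  eqmod ('X_(v a) - 'X_(v b)) (g v) (g (tperm a b * v)%g).
Proof.
move=> tau_s /cond_pairP f_ab /cond_pairP f_sab.
have f_s : eqmod ('X_(v a) - 'X_(v b)) (f (s * v)%g) (f (s * (tperm a b * v))%g).
  have := f_sab (s * v)%g; rewrite !permM !tpermK -tpermJ conjgE tpermV.
  by rewrite -!mulgA tpermKg.
have := eqmodB (f_ab v) f_s; rewrite fg fg !permM !eqmod_substP.
rewrite !rmorphM /= !rmorphB /= !subst_varX !rename_var_tperm.
apply: mulfI; rewrite mpolyX_subr_eq0; apply: contraNneq tau_s.
by move/(rename_var_perm_inj i01) ->.
Qed.

End Congruences.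

End DividedDifference.

Theorem lemma2 (R : realType) (n : nat) (i : nat) (hi : (i.+1 < n)%N)
    (Cs : {set {perm 'I_n}}) :
  (forall tau, tau \in Cs -> is_transposition tau) ->
  si_stable hi Cs ->
  (forall f, H_C (R := R) Cs f -> divdiff_defined hi f) /\
  (forall f g, H_C (R := R) Cs f -> is_divdiff hi f g -> H_C Cs g).
Proof.
(* Membership in H_tau already provides the transposition witness. *)
move=> _ [sC stab].
set i0 : 'I_n := Ordinal (ltnW hi); set i1 : 'I_n := Ordinal hi.
have i01 : i0 != i1 by rewrite -(inj_eq val_inj) /= ltn_eqF.
(* divdiff_defined hi f unfolds to cond_pair i0 i1 f. *)
split=> [f Hf | f g Hf fg tau tauC]; first exact: H_tau_tperm i01 (Hf _ sC).
have [a [b [ab tauE _]]] := Hf _ tauC; subst tau.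
have fg' v : f v - f (tperm i0 i1 * v)%g = ('X_(v i0) - 'X_(v i1)) * g v.
  by rewrite -star_tperm; apply: fg.
exists a, b; split=> //; apply/cond_pairP => v.
have [-> | tau_s] := eqVneq (tperm a b) (tperm i0 i1).
  by rewrite (divdiff_tperm_invariant i01 fg'); apply: eqmod_refl.
apply: (eqmod_divdiff i01 fg' v tau_s (H_tau_tperm ab (Hf _ tauC))).
apply: H_tau_tperm; first by rewrite (inj_eq perm_inj).
exact/Hf/stable_conj_tperm.
Qed.
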